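(* Let $\mathcal C$ be a $k$-coloured operad admitting the presentation $(G,\leftrightarrow)$. Then the enveloping operad $\mathrm{Env}(\mathcal C)$ admits the presentation $(\{\mathfrak c(g):g\in G\},\leftrightarrow')$. Here $S'\leftrightarrow' T'$ if and only if $S\leftrightarrow T$, where $S'$ (resp. $T'$) denotes the uncoloured syntax tree obtained from the coloured syntax tree $S$ (resp. $T$) by replacing each node labelled $x$ by the corolla $\mathfrak c(x)$ (i.e. forgetting colours). In other words, $\mathrm{Env}(\mathcal C)$ is isomorphic to the free uncoloured operad on the elements of $G$ (colours forgotten) modulo the operadic congruence generated by the relations $S'\leftrightarrow'T'$.
   Context: All operads are nonsymmetric operads in the category of sets. Fix $k\ge1$ and write $[k]=\{1,\dots,k\}$. A $k$-coloured collection is a graded set $G=\biguplus_{n\ge2}G(n)$ with maps $\mathrm{Out},\mathrm{In}_i$ to $[k]$ ($1\le i\le n$ for elements of $G(n)$). The free $k$-coloured operad $\mathcal F(G)$ consists of coloured syntax trees on $G$: planar rooted trees whose internal nodes of arity $\ell$ are labelled by elements of $G(\ell)$, such that if a node labelled $y$ is the $i$th child of a node labelled $x$, then $\mathrm{In}_i(x)=\mathrm{Out}(y)$. Composition is grafting of a root on a leaf of matching colour, together with one unit per colour. A $k$-coloured operad $\mathcal C$ (partial compositions $x\circ_i y$ defined exactly when $\mathrm{Out}(y)=\mathrm{In}_i(x)$, with $\mathcal C(1)$ consisting only of one unit per colour, and each $\mathcal C(n)$ finite) admits the presentation $(G,\leftrightarrow)$ if $G$ is a $k$-coloured collection and $\leftrightarrow$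 is an equivalence relation on $\mathcal F(G)$ such that $\mathcal C$ is isomorphic to $\mathcal F(G)/\!\equiv$, where $\equiv$ is the smallest coloured operadic congruence containing $\leftrightarrow$. The same notion applies to uncoloured operads ($k=1$). Let $\mathcal C^+=\mathcal C\setminus\mathcal C(1)$. The enveloping operad $\mathrm{Env}(\mathcal C)$ is the quotient of the free uncoloured operad on $\mathcal C^+$ (colours forgotten) by the smallest operadic congruence with $\mathfrak c(x)\circ_i\mathfrak c(y)\equiv\mathfrak c(x\circ_i y)$ whenever $x\circ_i y$ is defined in $\mathcal C$. Here $\mathfrak c(x)$ denotes the corolla (one-node tree) labelled $x$. *)

From mathcomp Require Import all_boot.
From Stdlib Require List.

Set Implicit Arguments.
Unset Strict Implicit.
Unset Printing Implicit Defensive.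

(* Leaves carry a label in A (a colour for coloured trees, [unit] for   *)
(* Indices of inputs / leaves are 0-based (paper's i is our i-1).      *)

Inductive tree (A L : Type) : Type :=
| Leaf of A
| Node of L & seq (tree A L).

Arguments Leaf {A L} _.
Arguments Node {A L} _ _.

Fixpoint leaves {A L} (t : tree A L) : seq A :=
  match t with
  | Leaf a => [:: a]
  | Node _ ts => flatten (map leaves ts)
  end.

Definition nleaves {A L} (t : tree A L) : nat := size (leaves t).

Fixpoint graft {A L} (t : tree A L) (i : nat) (u : tree A L) : tree A L :=
  match t with
  | Leaf _ => if i == 0 then u else t
  | Node x ts =>
      Node x ((fix gs (ts : seq (tree A L)) (i : nat) : seq (tree A L) :=
                 match ts with
                 | [::] => [::]
                 | t0 :: ts' =>
                     if i < nleaves t0 then graft t0 i u :: ts'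
                     else t0 :: gs ts' (i - nleaves t0)
                 end) ts i)
  end.

(* An element x has output colour [op_out x] and list of input colours *)
(* [op_ins x]; its arity is [size (op_ins x)].  [op_comp x i y] is the *)
(* partial composition x o_{i+1} y; it is only meaningful (and only    *)
(* constrained) when i < arity x and Out(y) = In_i(x).                 *)

Record coperad (k : nat) := COperad {
  op_car : Type;
  op_out : op_car -> 'I_k;
  op_ins : op_car -> seq 'I_k;
  op_comp : op_car -> nat -> op_car -> op_car;
  op_unit : 'I_k -> op_car }.

Arguments op_out {k} c _.
Arguments op_ins {k} c _.
Arguments op_comp {k} c _ _ _.
Arguments op_unit {k} c _.

Definition op_ar {k} (C : coperad k) (x : op_car C) : nat := size (op_ins C x).
Definition op_in {k} (C : coperad k) (x : op_car C) (i : nat) : 'I_k :=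
  nth (op_out C x) (op_ins C x) i.
Arguments op_ar {k} C x.
Arguments op_in {k} C x i.

Definition is_coperad {k} (C : coperad k) : Prop :=
  (forall c, op_out C (op_unit C c) = c /\ op_ins C (op_unit C c) = [:: c]) /\
  (forall x i y, i < op_ar C x -> op_out C y = op_in C x i ->
      op_out C (op_comp C x i y) = op_out C x /\
      op_ins C (op_comp C x i y) =
        take i (op_ins C x) ++ op_ins C y ++ drop i.+1 (op_ins C x)) /\
  (forall x, op_comp C (op_unit C (op_out C x)) 0 x = x) /\
  (forall x i, i < op_ar C x -> op_comp C x i (op_unit C (op_in C x i)) = x) /\
  (forall x y z i j, i < op_ar C x -> j < op_ar C y ->
      op_out C y = op_in C x i -> op_out C z = op_in C y j ->
      op_comp C x i (op_comp C y j z) = op_comp C (op_comp C x i y) (i + j) z) /\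
  (forall x y z i j, i < j -> j < op_ar C x ->
      op_out C y = op_in C x i -> op_out C z = op_in C x j ->
      op_comp C (op_comp C x i y) (j + op_ar C y - 1) z =
      op_comp C (op_comp C x j z) i y) /\
  (forall x, op_ar C x = 1 -> x = op_unit C (op_out C x)) /\
  (forall n, exists l : seq (op_car C), forall x, op_ar C x = n -> List.In x l).

(* wf: membership in the free operad; prof: the profile (arity and     *)
(* colours) that congruent elements must share; ok S i T: S o_i T is   *)
(* defined; gr: the composition.                                       *)

Definition is_congruence {X P : Type} (wf : X -> bool) (prof : X -> P)
    (ok : X -> nat -> X -> bool) (gr : X -> nat -> X -> X)
    (R : X -> X -> Prop) : Prop :=
  (forall S T, R S T -> wf S /\ wf T /\ prof S = prof T) /\
  (forall S, wf S -> R S S) /\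
  (forall S T, R S T -> R T S) /\
  (forall S T U, R S T -> R T U -> R S U) /\
  (forall S S' T T' i, R S S' -> R T T' -> ok S i T ->
      R (gr S i T) (gr S' i T')).

Definition gen_cong {X P : Type} (wf : X -> bool) (prof : X -> P)
    (ok : X -> nat -> X -> bool) (gr : X -> nat -> X -> X)
    (R : X -> X -> Prop) (S T : X) : Prop :=
  forall R' : X -> X -> Prop, is_congruence wf prof ok gr R' ->
    (forall a b, R a b -> R' a b) -> R' S T.

Definition is_equiv_on {X : Type} (wf : X -> bool) (R : X -> X -> Prop) : Prop :=
  (forall S T, R S T -> wf S /\ wf T) /\
  (forall S, wf S -> R S S) /\
  (forall S T, R S T -> R T S) /\
  (forall S T U, R S T -> R T U -> R S U).

(* Coloured syntax trees: leaves carry colours (a leaf of colour c is  *)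
(* the unit of colour c / an input of that colour).                    *)

Section Coloured.
Variables (k : nat) (G : Type) (Gout : G -> 'I_k) (Gin : G -> seq 'I_k).

Definition ctree := tree 'I_k G.

Definition cout (t : ctree) : 'I_k :=
  match t with Leaf c => c | Node x _ => Gout x end.

Fixpoint cwf (t : ctree) : bool :=
  match t with
  | Leaf _ => true
  | Node x ts => (map cout ts == Gin x) && all cwf ts
  end.

Definition cprof (t : ctree) : 'I_k * seq 'I_k := (cout t, leaves t).

Definition cok (S : ctree) (i : nat) (T : ctree) : bool :=
  (i < nleaves S) && (cout T == nth (cout T) (leaves S) i).

Definition ccong (R : ctree -> ctree -> Prop) : ctree -> ctree -> Prop :=
  gen_cong cwf cprof cok graft R.

Definition ccor (g : G) : ctree := Node g (map Leaf (Gin g)).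

Fixpoint forget (t : ctree) : tree unit G :=
  match t with
  | Leaf _ => Leaf tt
  | Node x ts => Node x (map forget ts)
  end.

End Coloured.

(** C admits the presentation (G, R), witnessed by phi: phi is a morphism
    of coloured operads F(G) -> C which is surjective and whose kernel is
    exactly the congruence generated by R; i.e. phi induces an isomorphism
    F(G)/== ~ C. *)
Definition presents {k : nat} (C : coperad k) {G : Type}
    (Gout : G -> 'I_k) (Gin : G -> seq 'I_k)
    (R : ctree k G -> ctree k G -> Prop) (phi : ctree k G -> op_car C) : Prop :=
  (forall c, phi (Leaf c) = op_unit C c) /\
  (forall S, cwf Gout Gin S ->
     op_out C (phi S) = cout Gout S /\ op_ins C (phi S) = leaves S) /\
  (forall S i T, cwf Gout Gin S -> cwf Gout Gin T -> cok Gout S i T ->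
     phi (graft S i T) = op_comp C (phi S) i (phi T)) /\
  (forall x, exists S, cwf Gout Gin S /\ phi S = x) /\
  (forall S T, cwf Gout Gin S -> cwf Gout Gin T ->
     (phi S = phi T <-> ccong Gout Gin R S T)).
Arguments presents {k} C {G} Gout Gin R phi.

Fixpoint uwf {L : Type} (ar : L -> nat) (t : tree unit L) : bool :=
  match t with
  | Leaf _ => true
  | Node x ts => (size ts == ar x) && all (uwf ar) ts
  end.

Definition uok {L : Type} (S : tree unit L) (i : nat) (T : tree unit L) : bool :=
  i < nleaves S.

Definition ucong {L : Type} (ar : L -> nat)
    (R : tree unit L -> tree unit L -> Prop) : tree unit L -> tree unit L -> Prop :=
  gen_cong (uwf ar) nleaves uok graft R.

Definition ucor {L : Type} (ar : L -> nat) (x : L) : tree unit L :=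
  Node x (nseq (ar x) (Leaf tt)).

(** C^+ : the elements of C of arity >= 2 (C(0) is empty, C(1) = units) *)
Definition Cplus {k : nat} (C : coperad k) : Type :=
  {x : op_car C | 1 < op_ar C x}.

Definition plus_ar {k : nat} (C : coperad k) (x : Cplus C) : nat :=
  op_ar C (proj1_sig x).
Arguments plus_ar {k} C x.

Definition env_rel {k : nat} (C : coperad k)
    (S T : tree unit (Cplus C)) : Prop :=
  exists (x y xy : Cplus C) (i : nat),
    i < plus_ar C x /\
    op_out C (proj1_sig y) = op_in C (proj1_sig x) i /\
    proj1_sig xy = op_comp C (proj1_sig x) i (proj1_sig y) /\
    S = graft (ucor (plus_ar C) x) i (ucor (plus_ar C) y) /\
    T = ucor (plus_ar C) xy.

Arguments env_rel {k} C S T.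

(** the congruence defining Env(C) = F(C^+)/env_cong *)
Definition env_cong {k : nat} (C : coperad k) :
    tree unit (Cplus C) -> tree unit (Cplus C) -> Prop :=
  ucong (plus_ar C) (env_rel C).
Arguments env_cong {k} C _ _.

Definition forget_rel {k : nat} {G : Type} (R : ctree k G -> ctree k G -> Prop)
    (A B : tree unit G) : Prop :=
  exists S T, R S T /\ A = forget S /\ B = forget T.

From mathcomp Require Import all_boot zify.
From Stdlib Require Import IndefiniteDescription.

Set Implicit Arguments.
Unset Strict Implicit.
Unset Printing Implicit Defensive.

(* Relabelling every generator [g] by the element [c(g) = phi (ccor g)] of C^+ gives a
   morphism [Theta] from the free operad on G to the free operad on C^+.  An element [z]
   of C is represented in Env(C) by its corolla, or by the unit when [z] has arity one;
   since both [S |-> Theta (forget S)] and [S |-> env_of (phi S)] are compatible with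
   grafting and agree on corollas, they are congruent, so [Theta] maps <->' into the
   congruence defining Env(C).  Conversely, substituting for each node [x] of a tree
   over C^+ the forgotten tree of a chosen preimage of [x] under [phi] gives a map [Psi]
   back, which sends [c(x) o_i c(y) ~ c(x o_i y)] into ==' because [phi] identifies the
   two sides.  [Theta] and [Psi] are mutually inverse up to the two congruences. *)

Lemma unit_nseq (s : seq unit) : s = nseq (size s) tt.
Proof. by elim: s => //= -[] s <-. Qed.

Lemma In_nth (T : Type) (d : T) s m : m < size s -> List.In (nth d s m) s.
Proof. by elim: s m => //= a s IH [|m] /= Hm; [left | right; apply: IH]. Qed.

Lemma all_In (T : Type) (a : pred T) s : all a s <-> (forall t, List.In t s -> a t).
Proof.
elim: s => //= b s IH; split => [/andP[Hb /IH Hs] t [<-|/Hs]|H] //.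
by rewrite H /=; [apply/IH => t Ht; apply: H; right | left].
Qed.

Lemma eq_map_In (T U : Type) (f g : T -> U) (s : seq T) :
  (forall t, List.In t s -> f t = g t) -> map f s = map g s.
Proof. by elim: s => //= a s IH H; rewrite H ?IH //; [move=> t Ht; apply: H; right | left]. Qed.

Lemma eq_all_In (T : Type) (a b : pred T) s :
  (forall t, List.In t s -> a t = b t) -> all a s = all b s.
Proof. by elim: s => //= c s IH H; rewrite H ?IH //; [move=> t Ht; apply: H; right | left]. Qed.

Section TakeDropCons.
Variables (T : Type) (n : nat) (s1 s2 : seq T) (v : T).
Hypothesis lt_s1n : size s1 < n.

Lemma take_cat_cons : take n (s1 ++ v :: s2) = s1 ++ v :: take (n - size s1).-1 s2.
Proof.
rewrite take_cat ltnNge ltnW //=; case E: (n - size s1) => [|m] //.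
by move: lt_s1n; rewrite -subn_gt0 E.
Qed.

Lemma drop_cat_cons : drop n (s1 ++ v :: s2) = drop (n - size s1).-1 s2.
Proof.
rewrite drop_cat ltnNge ltnW //=; case E: (n - size s1) => [|m] //.
by move: lt_s1n; rewrite -subn_gt0 E.
Qed.

End TakeDropCons.

Lemma dropl_cat (T : Type) n (s1 s2 : seq T) : n <= size s1 ->
  drop n (s1 ++ s2) = drop n s1 ++ s2.
Proof.
rewrite drop_cat leq_eqVlt => /orP[/eqP->|->] //.
by rewrite ltnn subnn drop0 drop_size.
Qed.

Section Trees.
Variables (A L : Type).
Implicit Types (t u : tree A L) (ts : seq (tree A L)).

Lemma tree_ind' (P : tree A L -> Prop) :
  (forall a, P (Leaf a)) ->
  (forall x ts, (forall t, List.In t ts -> P t) -> P (Node x ts)) ->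
  forall t, P t.
Proof.
move=> HL HN.
refine (fix F t := match t with Leaf a => HL a | Node x ts => HN x ts _ end).
refine ((fix G ts : forall t, List.In t ts -> P t :=
   match ts with
   | [::] => fun t H => False_ind _ H
   | t0 :: ts' => fun t H =>
       match H with or_introl E => _ | or_intror H' => G ts' t H' end
   end) ts).
rewrite -E; exact: F.
Defined.

Lemma size_flatten_leaves ts : size (flatten (map leaves ts)) = sumn (map nleaves ts).
Proof. by rewrite size_flatten /shape -map_comp. Qed.

Lemma nleaves_node x ts : nleaves (Node x ts) = sumn (map nleaves ts).
Proof. exact: size_flatten_leaves. Qed.

(* The inner fixpoint of [graft], acting on the children of a node. *)
Fixpoint graft_seq u ts i : seq (tree A L) :=
  match ts with
  | [::] => [::]
  | t0 :: ts' => if i < nleaves t0 then graft t0 i u :: ts'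
                 else t0 :: graft_seq u ts' (i - nleaves t0)
  end.

Lemma graft_node x ts i u : graft (Node x ts) i u = Node x (graft_seq u ts i).
Proof. by congr Node; elim: ts i => //= t0 ts IH i; rewrite IH. Qed.

Lemma graft_seqP u ts i : i < sumn (map nleaves ts) ->
  exists ts1 t ts2 j, [/\ ts = ts1 ++ t :: ts2, i = sumn (map nleaves ts1) + j,
    j < nleaves t & graft_seq u ts i = ts1 ++ graft t j u :: ts2].
Proof.
elim: ts i => [|t0 ts IH] i //= Hi; case: ifP => Hlt; first by exists [::], t0, ts, i.
have [|ts1 [t [ts2 [j [-> E2 Hj ->]]]]] := IH (i - nleaves t0); first lia.
by exists (t0 :: ts1), t, ts2, j; split => //=; lia.
Qed.

Lemma graft_seq_cat u ts1 t ts2 j : j < nleaves t ->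
  graft_seq u (ts1 ++ t :: ts2) (sumn (map nleaves ts1) + j) = ts1 ++ graft t j u :: ts2.
Proof.
move=> Hj; elim: ts1 => [|t0 ts1 IH] /=; first by rewrite Hj.
by rewrite ifF -?addnA ?addKn ?IH //; lia.
Qed.

Lemma graft_node_leaf x ts1 a ts2 u :
  graft (Node x (ts1 ++ Leaf a :: ts2)) (sumn (map nleaves ts1)) u =
  Node x (ts1 ++ u :: ts2).
Proof. by rewrite graft_node -[sumn _]addn0 graft_seq_cat. Qed.

Lemma leaves_graft t i u : i < nleaves t ->
  leaves (graft t i u) = take i (leaves t) ++ leaves u ++ drop i.+1 (leaves t).
Proof.
elim/tree_ind': t i => [a|x ts IH] i.
  by rewrite /nleaves; case: i => //= _; rewrite cats0.
rewrite nleaves_node graft_node => /(graft_seqP u) [ts1 [t [ts2 [j [Ets -> Hj ->]]]]].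
rewrite /= Ets !map_cat !flatten_cat /= IH //; last by rewrite Ets List.in_app_iff; right; left.
rewrite take_cat drop_cat size_flatten_leaves !ifF ?addKn ?subSn ?addKn; try lia.
rewrite take_cat drop_cat /nleaves in Hj *.
rewrite Hj -!catA; case: ltnP => // Hj'.
have -> : j.+1 = size (leaves t) by lia.
by rewrite drop_size subnn drop0.
Qed.

Lemma nleaves_graft t i u : i < nleaves t ->
  nleaves (graft t i u) = nleaves t + nleaves u - 1.
Proof.
move=> Hi; rewrite {1}/nleaves leaves_graft // !size_cat size_take size_drop.
by rewrite /nleaves in Hi *; rewrite Hi; lia.
Qed.

End Trees.

Fixpoint tmap (A B L M : Type) (fa : A -> B) (fl : L -> M) (t : tree A L) : tree B M :=
  match t with
  | Leaf a => Leaf (fa a)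
  | Node x ts => Node (fl x) (map (tmap fa fl) ts)
  end.

Section TreeMap.
Variables (A B L M : Type) (fa : A -> B) (fl : L -> M).

Lemma leaves_tmap t : leaves (tmap fa fl t) = map fa (leaves t).
Proof.
elim/tree_ind': t => [a|x ts IH] //=.
by rewrite map_flatten -!map_comp; congr flatten; apply: eq_map_In.
Qed.

Lemma nleaves_tmap t : nleaves (tmap fa fl t) = nleaves t.
Proof. by rewrite /nleaves leaves_tmap size_map. Qed.

Lemma tmap_graft t i u :
  tmap fa fl (graft t i u) = graft (tmap fa fl t) i (tmap fa fl u).
Proof.
elim/tree_ind': t i => [a|x ts IH] i; first by rewrite /=; case: ifP.
rewrite graft_node [tmap _ _ (Node x ts)]/= graft_node /=; congr Node.
elim: ts i IH => //= t0 ts IHts i IH; rewrite nleaves_tmap.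
case: ifP => _ /=; first by rewrite IH //; left.
by rewrite IHts // => t Ht; apply: IH; right.
Qed.

End TreeMap.

(* A common generalisation of [cwf] (coloured trees) and [uwf] (for [A = unit]). *)
Section WellFormed.
Variables (A : eqType) (L : Type) (lout : L -> A) (lins : L -> seq A).
Implicit Types (t u : tree A L) (ts : seq (tree A L)).

Definition tout t : A := match t with Leaf a => a | Node x _ => lout x end.

Fixpoint twf t : bool :=
  match t with
  | Leaf _ => true
  | Node x ts => (map tout ts == lins x) && all twf ts
  end.

Definition tok t i u : bool := (i < nleaves t) && (tout u == nth (tout u) (leaves t) i).

Lemma twf_graft t i u : twf t -> twf u -> tok t i u ->
  twf (graft t i u) /\ tout (graft t i u) = tout t.
Proof.
elim/tree_ind': t i => [a|x ts IH] i.
  by move=> _ Hu /andP[]; rewrite /nleaves; case: i => //= _ /eqP.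
rewrite graft_node /tok nleaves_node => /= /andP[/eqP Hts Hall] Hu /andP[].
move=> /(graft_seqP u) [ts1 [t [ts2 [j [Ets Ei Hj ->]]]]] Hc; split => //.
move: Hts Hall; rewrite Ets map_cat all_cat /= => <- /and3P[Hall1 Ht Hall2].
have Htu : tok t j u.
  rewrite /tok Hj /=; move: Hc; rewrite Ets /= map_cat flatten_cat /= nth_cat.
  rewrite size_flatten_leaves Ei ifF ?addKn; last lia.
  by rewrite nth_cat ifT.
have Hin : List.In t ts by rewrite Ets List.in_app_iff; right; left.
have [Hw Ho] := IH t Hin j Ht Hu Htu.
by rewrite map_cat /= Ho all_cat /= Hw Hall1 Hall2 eqxx.
Qed.

Definition partial_node x ts m : tree A L :=
  Node x (take m ts ++ drop m (map Leaf (lins x))).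

Section PartialNode.
Variables (x : L) (ts : seq (tree A L)).
Hypothesis Hts : map tout ts = lins x.

Lemma twf_partial_node m : all twf ts -> twf (partial_node x ts m).
Proof.
rewrite -{1}(cat_take_drop m ts) all_cat => /andP[Hall _] /=.
have toutK l : map tout (map Leaf l) = l by elim: l => //= a l ->.
rewrite map_cat map_take map_drop toutK Hts cat_take_drop eqxx all_cat Hall /=.
by rewrite -map_drop all_map; apply/allP.
Qed.

Lemma partial_node_graft m t : m < size ts ->
  let p := sumn (map nleaves (take m ts)) in
  tok (partial_node x ts m) p (nth t ts m) /\
  partial_node x ts m.+1 = graft (partial_node x ts m) p (nth t ts m).
Proof.
move=> Hm p; have Hms : m < size (lins x) by rewrite -Hts size_map.
have Hdrop : drop m (map Leaf (lins x)) =
    Leaf (nth (tout t) (lins x) m) :: drop m.+1 (map Leaf (lins x)) :> seq (tree A L).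
  by rewrite (drop_nth (Leaf (tout t))) ?size_map // (nth_map (tout t)).
split.
  rewrite /tok /nleaves.
  have -> : leaves (partial_node x ts m) =
      flatten (map leaves (take m ts)) ++ drop m (lins x).
    by rewrite /= map_cat flatten_cat -map_drop; congr (_ ++ _); elim: (drop m _) => //= a l ->.
  rewrite size_cat size_flatten_leaves size_drop nth_cat size_flatten_leaves.
  rewrite ltnn subnn nth_drop addn0 -Hts (nth_map t) // eqxx andbT size_map /p; lia.
by rewrite /partial_node Hdrop graft_node_leaf (take_nth t) // -cats1 -catA.
Qed.

End PartialNode.

Lemma twf_graft_ind (P : tree A L -> Prop) :
  (forall a, P (Leaf a)) ->
  (forall x, P (Node x (map Leaf (lins x)))) ->
  (forall t i u, twf t -> twf u -> tok t i u -> P t -> P u -> P (graft t i u)) ->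
  forall t, twf t -> P t.
Proof.
move=> HL Hcor Hgraft; elim/tree_ind' => [a _|x ts IH /= /andP[/eqP Hts Hall]].
  exact: HL.
have Hfill m : m <= size ts -> P (partial_node x ts m).
  elim: m => [_|m IHm Hm]; first by rewrite /partial_node take0 drop0.
  have [Hok ->] := partial_node_graft Hts (Leaf (lout x)) Hm.
  have Hin := In_nth (Leaf (lout x)) Hm.
  have /all_nthP/(_ m Hm) Ht := Hall.
  by apply: Hgraft => //; [exact: twf_partial_node | exact: IHm (ltnW Hm) | exact: IH].
have := Hfill _ (leqnn (size ts)).
by rewrite /partial_node take_size drop_oversize ?cats0 // size_map -Hts size_map.
Qed.

End WellFormed.

Lemma tout_tmap (A B : eqType) (L M : Type) (fa : A -> B) (fl : L -> M) lout lout' t :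
  (forall x, lout' (fl x) = fa (lout x)) -> tout lout' (tmap fa fl t) = fa (tout lout t).
Proof. by case: t => [a|x ts] /=. Qed.

Lemma twf_tmap (A B : eqType) (L M : Type) (fa : A -> B) (fl : L -> M)
    lout lins lout' lins' t :
  (forall x, lout' (fl x) = fa (lout x)) -> (forall x, lins' (fl x) = map fa (lins x)) ->
  twf lout lins t -> twf lout' lins' (tmap fa fl t).
Proof.
move=> Hout Hins; elim/tree_ind': t => [a|x ts IH] //= /andP[/eqP Hts Hall].
rewrite Hins -Hts -map_comp (eq_map (fun t => tout_tmap t Hout)) map_comp eqxx /=.
rewrite all_map; apply/all_In => t Ht; apply: IH => //.
by move/all_In: Hall; apply.
Qed.

(* [cwf Gout Gin] and [cout Gout] are convertible to [twf Gout Gin] and [tout Gout]. *)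
Lemma cwf_graft_ind k G (Gout : G -> 'I_k) Gin (P : ctree k G -> Prop) :
  (forall c, P (Leaf c)) -> (forall g, P (ccor Gin g)) ->
  (forall S i T, cwf Gout Gin S -> cwf Gout Gin T -> cok Gout S i T ->
     P S -> P T -> P (graft S i T)) ->
  forall S, cwf Gout Gin S -> P S.
Proof. exact: twf_graft_ind. Qed.

Lemma cwf_graft k G (Gout : G -> 'I_k) Gin (S T : ctree k G) i :
  cwf Gout Gin S -> cwf Gout Gin T -> cok Gout S i T ->
  cwf Gout Gin (graft S i T) /\ cout Gout (graft S i T) = cout Gout S.
Proof. exact: twf_graft. Qed.

Section Uncoloured.
Variables (L : Type) (ar : L -> nat).
Implicit Types (t u : tree unit L).

Lemma uwfE t : uwf ar t = twf (fun _ => tt) (fun x => nseq (ar x) tt) t.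
Proof.
elim/tree_ind': t => [[]|x ts IH] //=; rewrite (eq_all_In IH) [map _ _]unit_nseq size_map.
by congr andb; apply/eqP/eqP => [->|/(congr1 size)]; rewrite ?size_nseq.
Qed.

Lemma uwf_graft t i u : uwf ar t -> uwf ar u -> i < nleaves t -> uwf ar (graft t i u).
Proof.
rewrite !uwfE => Ht Hu Hi.
have Hok : tok (fun _ => tt) t i u by rewrite /tok Hi.
by have [] := twf_graft Ht Hu Hok.
Qed.

Lemma uwf_graft_ind (P : tree unit L -> Prop) :
  P (Leaf tt) -> (forall x, P (ucor ar x)) ->
  (forall t i u, uwf ar t -> uwf ar u -> i < nleaves t -> P t -> P u -> P (graft t i u)) ->
  forall t, uwf ar t -> P t.
Proof.
move=> HL Hcor Hgraft t; rewrite uwfE; apply: twf_graft_ind => [[]|x|t' i u] //.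
  by rewrite map_nseq; apply: Hcor.
by rewrite -!uwfE => ? ? /andP[? _]; apply: Hgraft.
Qed.

Lemma uwf_ucor x : uwf ar (ucor ar x).
Proof. by rewrite /= size_nseq eqxx; elim: (ar x). Qed.

Lemma nleaves_ucor x : nleaves (ucor ar x) = ar x.
Proof. by rewrite nleaves_node; elim: (ar x) => //= n ->. Qed.

Lemma graft_unit_leaf t i : graft t i (Leaf tt) = t.
Proof.
elim/tree_ind': t i => [[]|x ts IH] i; first by rewrite /=; case: (i == 0).
rewrite graft_node; congr Node; elim: ts i IH => //= t0 ts IHts i IH.
case: ifP => _; first by rewrite IH //; left.
by rewrite IHts // => t Ht; apply: IH; right.
Qed.

End Uncoloured.

(** * Substitution *)

Section Subst.
Variables (A L : Type).
Implicit Types (t u w : tree A L) (ts us : seq (tree A L)).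

(* [subst t us] replaces the leaves of [t], from left to right, by the trees [us]. *)
Fixpoint subst t us : tree A L :=
  match t with
  | Leaf _ => head t us
  | Node x ts => Node x ((fix substs ts us := match ts with
       | [::] => [::]
       | t0 :: ts' => subst t0 (take (nleaves t0) us) :: substs ts' (drop (nleaves t0) us)
       end) ts us)
  end.

(* The inner fixpoint of [subst]. *)
Fixpoint substs ts us : seq (tree A L) :=
  match ts with
  | [::] => [::]
  | t0 :: ts' => subst t0 (take (nleaves t0) us) :: substs ts' (drop (nleaves t0) us)
  end.

Lemma subst_node x ts us : subst (Node x ts) us = Node x (substs ts us).
Proof. by congr Node; elim: ts us => //= t0 ts IH us; rewrite IH. Qed.

Lemma size_substs ts us : size (substs ts us) = size ts.
Proof. by elim: ts us => //= t0 ts IH us; rewrite IH. Qed.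

Lemma nleaves_subst t us : size us = nleaves t ->
  nleaves (subst t us) = sumn (map nleaves us).
Proof.
elim/tree_ind': t us => [a|x ts IH] us.
  by case: us => [|u [|]] //= _; rewrite addn0.
rewrite subst_node !nleaves_node; elim: ts us IH => [|t0 ts IHts] us IH /=.
  by case: us.
move=> Hs; rewrite -{3}(cat_take_drop (nleaves t0) us) map_cat sumn_cat.
have Htake : size (take (nleaves t0) us) = nleaves t0 by rewrite size_takel // Hs leq_addr.
have Hdrop : size (drop (nleaves t0) us) = sumn (map nleaves ts) by rewrite size_drop Hs addKn.
rewrite IH ?IHts //; [by move=> t Ht; apply: IH; right | by left].
Qed.

Lemma subst_graft t us1 u us2 j w :
  size (us1 ++ u :: us2) = nleaves t -> j < nleaves u ->
  graft (subst t (us1 ++ u :: us2)) (sumn (map nleaves us1) + j) w =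
  subst t (us1 ++ graft u j w :: us2).
Proof.
elim/tree_ind': t us1 u us2 j w => [a|x ts IH] us1 u us2 j w.
  by case: us1 => [|? []] //=; case: us2.
rewrite !subst_node graft_node nleaves_node => Hs Hj; congr Node.
elim: ts us1 IH Hs => [|t0 ts IHts] us1 IH /=; first by rewrite size_cat.
set n := nleaves t0 => Hs.
case: (ltnP (size us1) n) => Hlt.
  rewrite !take_cat_cons // !drop_cat_cons //; set vs := take _ us2.
  have Hvs : size (us1 ++ u :: vs) = n.
    by rewrite size_cat /= size_takel; move: Hs; rewrite size_cat /=; lia.
  rewrite nleaves_subst // map_cat sumn_cat /= ifT; last lia.
  by rewrite IH //; left.
rewrite !takel_cat // !dropl_cat // nleaves_subst ?size_takel //.
have Hsum : sumn (map nleaves us1) =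
    sumn (map nleaves (take n us1)) + sumn (map nleaves (drop n us1)).
  by rewrite -sumn_cat -map_cat cat_take_drop.
rewrite ifF Hsum -?addnA ?addKn; try lia.
rewrite IHts //; first by move=> t Ht; apply: IH; right.
by move: Hs; rewrite !size_cat size_drop /=; lia.
Qed.

Lemma subst_id t : subst t (map Leaf (leaves t)) = t.
Proof.
elim/tree_ind': t => [a|x ts IH] //; rewrite subst_node /=; congr Node.
elim: ts IH => //= t0 ts IHts IH; rewrite map_cat.
rewrite take_size_cat ?drop_size_cat ?size_map // IH ?IHts //; last by left.
by move=> t Ht; apply: IH; right.
Qed.

End Subst.

Section UncolouredSubst.
Variables (L : Type) (ar : L -> nat).
Implicit Types (t : tree unit L) (us : seq (tree unit L)).

Lemma subst_unit_leaves t : subst t (nseq (nleaves t) (Leaf tt)) = t.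
Proof. by rewrite -[in RHS](subst_id t) [leaves t]unit_nseq map_nseq. Qed.

Lemma uwf_subst t us :
  uwf ar t -> all (uwf ar) us -> size us = nleaves t -> uwf ar (subst t us).
Proof.
elim/tree_ind': t us => [a|x ts IH] us.
  by case: us => [|u [|]] //= _ /andP[].
rewrite subst_node nleaves_node /= size_substs => /andP[-> Hall] Hus /=.
elim: ts us IH Hall Hus => //= t0 ts IHts us IH /andP[Ht0 Hall] Hus Hs.
have /andP[Htake Hdrop] : all (uwf ar) (take (nleaves t0) us) &&
    all (uwf ar) (drop (nleaves t0) us) by rewrite -all_cat cat_take_drop.
rewrite IH ?IHts ?size_takel ?size_drop ?Hs ?addKn ?leq_addr //; last by left.
by move=> t Ht; apply: IH; right.
Qed.

End UncolouredSubst.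

(* The extension of [f] to a morphism of free operads: every node [x] becomes [f x]. *)
Fixpoint ext (L M : Type) (f : L -> tree unit M) (t : tree unit L) : tree unit M :=
  match t with
  | Leaf a => Leaf a
  | Node x ts => subst (f x) (map (ext f) ts)
  end.

Section Ext.
Variables (L M : Type) (ar : L -> nat) (ar' : M -> nat) (f : L -> tree unit M).
Hypothesis nleaves_f : forall x, nleaves (f x) = ar x.
Hypothesis uwf_f : forall x, uwf ar' (f x).

Lemma nleaves_ext t : uwf ar t -> nleaves (ext f t) = nleaves t.
Proof.
elim/tree_ind': t => [a|x ts IH] //= /andP[/eqP Hs Hall].
rewrite nleaves_subst ?size_map ?Hs // nleaves_node -map_comp; congr sumn.
apply: eq_map_In => t Ht /=; apply: IH => //; exact: (proj1 (all_In _ _) Hall).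
Qed.

Lemma uwf_ext t : uwf ar t -> uwf ar' (ext f t).
Proof.
elim/tree_ind': t => [a|x ts IH] //= /andP[/eqP Hs Hall].
apply: uwf_subst; rewrite ?size_map ?Hs //; apply/all_In => _ /List.in_map_iff [t [<- Ht]].
by apply: IH => //; exact: (proj1 (all_In _ _) Hall).
Qed.

Lemma ext_graft t i u : uwf ar t -> i < nleaves t ->
  ext f (graft t i u) = graft (ext f t) i (ext f u).
Proof.
elim/tree_ind': t i => [[]|x ts IH] i; first by rewrite /nleaves; case: i.
rewrite nleaves_node graft_node /= => /andP[/eqP Hs Hall].
move=> /(graft_seqP u) [ts1 [t [ts2 [j [Ets -> Hj ->]]]]].
move: Hs Hall; rewrite Ets all_cat /= => Hs /and3P[Hall1 Ht _].
have -> : sumn (map nleaves ts1) = sumn (map nleaves (map (ext f) ts1)).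
  rewrite -map_comp; apply/congr1/eq_map_In => t' Ht' /=.
  by rewrite nleaves_ext //; exact: (proj1 (all_In _ _) Hall1).
have Hin : List.In t ts by rewrite Ets List.in_app_iff; right; left.
rewrite !map_cat /= IH //.
by rewrite subst_graft ?nleaves_ext // size_cat /= !size_map nleaves_f -Hs size_cat.
Qed.

Lemma ext_ucor x : ext f (ucor ar x) = f x.
Proof. by rewrite /= map_nseq /= -nleaves_f subst_unit_leaves. Qed.

End Ext.

Section Congruence.
Variables (X P : Type) (wf : X -> bool) (prof : X -> P) (ok : X -> nat -> X -> bool)
  (gr : X -> nat -> X -> X).

Definition prof_rel (S T : X) : Prop := [/\ wf S, wf T & prof S = prof T].

Section Laws.
Variable R : X -> X -> Prop.
Hypothesis congR : is_congruence wf prof ok gr R.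

Lemma congr_refl S : wf S -> R S S.
Proof. by case: congR => _ [H _]; apply: H. Qed.

Lemma congr_sym S T : R S T -> R T S.
Proof. by case: congR => _ [_ [H _]]; apply: H. Qed.

Lemma congr_trans S T U : R S T -> R T U -> R S U.
Proof. by case: congR => _ [_ [_ [H _]]]; apply: H. Qed.

Lemma congr_graft S S' T T' i : R S S' -> R T T' -> ok S i T -> R (gr S i T) (gr S' i T').
Proof. by case: congR => _ [_ [_ [_ H]]]; apply: H. Qed.

End Laws.

Lemma gen_cong_incl (R : X -> X -> Prop) S T : R S T -> gen_cong wf prof ok gr R S T.
Proof. by move=> HST R' _; apply. Qed.

Variable R : X -> X -> Prop.
Hypothesis congr_prof_rel : is_congruence wf prof ok gr prof_rel.
Hypothesis R_prof : forall S T, R S T -> prof_rel S T.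

Lemma gen_cong_congruence : is_congruence wf prof ok gr (gen_cong wf prof ok gr R).
Proof.
split; [|split; [|split; [|split]]].
- by move=> S T /(_ _ congr_prof_rel R_prof) [].
- move=> S HS R' HR' _; exact: (congr_refl HR' HS).
- by move=> S T H R' HR' HRR'; exact: (congr_sym HR' (H R' HR' HRR')).
- by move=> S T U H1 H2 R' HR' HRR'; exact: (congr_trans HR' (H1 R' HR' HRR') (H2 R' HR' HRR')).
- move=> S S' T T' i H1 H2 Hok R' HR' HRR'.
  exact: (congr_graft HR' (H1 R' HR' HRR') (H2 R' HR' HRR') Hok).
Qed.

End Congruence.

Lemma gen_cong_map (X P Y Q : Type) (wf : X -> bool) (prof : X -> P) ok gr
    (R : X -> X -> Prop) (wfY : Y -> bool) (profY : Y -> Q) okY grY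
    (RY : Y -> Y -> Prop) (f : X -> Y) :
  is_congruence wf prof ok gr (prof_rel wf prof) ->
  is_congruence wfY profY okY grY RY ->
  (forall S S' T T' i, prof S = prof S' -> prof T = prof T' -> ok S i T -> ok S' i T') ->
  (forall S, wf S -> wfY (f S)) ->
  (forall S i T, wf S -> wf T -> ok S i T -> okY (f S) i (f T)) ->
  (forall S i T, wf S -> wf T -> ok S i T -> f (gr S i T) = grY (f S) i (f T)) ->
  (forall S T, R S T -> prof_rel wf prof S T) ->
  (forall S T, R S T -> RY (f S) (f T)) ->
  forall S T, gen_cong wf prof ok gr R S T -> RY (f S) (f T).
Proof.
move=> congX congRY ok_prof f_wf f_ok f_gr R_prof f_R S T HST.
pose RX S T := prof_rel wf prof S T /\ RY (f S) (f T).
suff [] : RX S T by [].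
apply: HST => [|a b Hab]; last by split; [exact: R_prof | exact: f_R].
split; [|split; [|split; [|split]]].
- by move=> ? ? [[]].
- by move=> S0 H0; split; [|exact: (congr_refl congRY (f_wf _ H0))].
- by move=> ? ? [[? ? E] H]; split; [|exact: (congr_sym congRY H)].
- move=> ? ? ? [[? ? E1] H1] [[? ? E2] H2].
  by split; [split => //; rewrite E1 E2|exact: (congr_trans congRY H1 H2)].
move=> S1 S1' T1 T1' i [H1 F1] [H2 F2] Hok.
have [wS1 wS1' pS1] := H1; have [wT1 wT1' pT1] := H2.
split; first exact: (congr_graft congX H1 H2 Hok).
rewrite !f_gr //; last exact: (ok_prof _ _ _ _ _ pS1 pT1 Hok).
exact: (congr_graft congRY F1 F2 (f_ok _ _ _ wS1 wT1 Hok)).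
Qed.

Lemma uok_prof L (t t' u u' : tree unit L) i :
  nleaves t = nleaves t' -> nleaves u = nleaves u' -> uok t i u -> uok t' i u'.
Proof. by rewrite /uok => ->. Qed.

Lemma uprof_congruence (L : Type) (ar : L -> nat) :
  is_congruence (uwf ar) nleaves uok graft (prof_rel (uwf ar) nleaves).
Proof.
split; [|split; [|split; [|split]]] => //.
- by move=> S T [].
- by move=> S T [].
- by move=> S T U [? ? eST] [? ? eTU]; split; rewrite // eST.
move=> S S' T T' i [wS wS' eS] [wT wT' eT] Hi; have Hi' : i < nleaves S' by rewrite -eS.
by split; rewrite ?uwf_graft // !nleaves_graft // eS eT.
Qed.

Lemma cok_prof k G (Gout : G -> 'I_k) (S S' T T' : ctree k G) i :
  cprof Gout S = cprof Gout S' -> cprof Gout T = cprof Gout T' ->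
  cok Gout S i T = cok Gout S' i T'.
Proof. by rewrite /cok /nleaves => -[_ ->] [-> _]. Qed.

Lemma cprof_congruence k G (Gout : G -> 'I_k) Gin :
  is_congruence (cwf Gout Gin) (cprof Gout) (cok Gout) graft
    (prof_rel (cwf Gout Gin) (cprof Gout)).
Proof.
split; [|split; [|split; [|split]]] => //.
- by move=> S T [].
- by move=> S T [].
- by move=> S T U [? ? eST] [? ? eTU]; split; rewrite // eST.
move=> S S' T T' i [wS wS' eS] [wT wT' eT] Hok.
have Hok' : cok Gout S' i T' by rewrite -(cok_prof i eS eT).
have [wST oST] := cwf_graft wS wT Hok; have [wST' oST'] := cwf_graft wS' wT' Hok'.
have /andP[Hi _] := Hok; have /andP[Hi' _] := Hok'.
split; rewrite // /cprof oST oST' !leaves_graft //.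
by case: eS eT => -> -> [_ ->].
Qed.

(** * The enveloping operad *)

Section Envelope.
Variables (k : nat) (C : coperad k).
Hypothesis HC : is_coperad C.
Variables (G : Type) (Gout : G -> 'I_k) (Gin : G -> seq 'I_k).
Hypothesis HG : forall g, 2 <= size (Gin g).
Variable R : ctree k G -> ctree k G -> Prop.
Hypothesis HR : is_equiv_on (cwf Gout Gin) R.
Variable phi : ctree k G -> op_car C.
Hypothesis Hphi : presents C Gout Gin R phi.

Local Notation gar := (fun g : G => size (Gin g)).
Local Notation ar := (op_ar C).
Implicit Types (S T : ctree k G) (t u : tree unit G) (x y z : op_car C).

Lemma ins_unit c : op_ins C (op_unit C c) = [:: c].
Proof. by case: HC => /(_ c) []. Qed.

Lemma ins_comp x i y : i < ar x -> op_out C y = op_in C x i ->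
  op_ins C (op_comp C x i y) = take i (op_ins C x) ++ op_ins C y ++ drop i.+1 (op_ins C x).
Proof. by case: HC => _ [H _] Hi Hy; case: (H x i y Hi Hy). Qed.

Lemma ar_comp x i y : i < ar x -> op_out C y = op_in C x i ->
  ar (op_comp C x i y) = ar x + ar y - 1.
Proof.
move=> Hi Hy; rewrite /op_ar ins_comp // !size_cat size_take size_drop.
by move: Hi; rewrite /op_ar => Hi; rewrite Hi; lia.
Qed.

Lemma comp_unitl x : op_comp C (op_unit C (op_out C x)) 0 x = x.
Proof. by case: HC => _ [_ [H _]]. Qed.

Lemma comp_unitr x i : i < ar x -> op_comp C x i (op_unit C (op_in C x i)) = x.
Proof. by case: HC => _ [_ [_ [H _]]]; apply: H. Qed.

Lemma ar1_unit x : ar x = 1 -> x = op_unit C (op_out C x).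
Proof. by case: HC => _ [_ [_ [_ [_ [_ [H _]]]]]]; apply: H. Qed.

Lemma env_rel_prof A B : env_rel C A B -> prof_rel (uwf (plus_ar C)) nleaves A B.
Proof.
move=> [x [y [xy [i [Hi [Hout [Hxy [-> ->]]]]]]]].
split; rewrite ?uwf_graft ?uwf_ucor ?nleaves_ucor //.
by rewrite nleaves_graft ?nleaves_ucor // /plus_ar Hxy ar_comp.
Qed.

Lemma env_congruence :
  is_congruence (uwf (plus_ar C)) nleaves uok graft (env_cong C).
Proof. exact: (gen_cong_congruence (uprof_congruence _) env_rel_prof). Qed.

(* [z] as an element of Env(C): its corolla if [z] lies in C^+, the unit otherwise
   (in C arity one means being a unit). *)
Definition env_of z : tree unit (Cplus C) :=
  if insub z is Some x then ucor (plus_ar C) x else Leaf tt.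

Lemma env_of_val (x : Cplus C) : env_of (val x) = ucor (plus_ar C) x.
Proof. by rewrite /env_of valK. Qed.

Lemma env_of_unit z : ar z <= 1 -> env_of z = Leaf tt.
Proof. by move=> Hz; rewrite /env_of insubF // ltnNge Hz. Qed.

Lemma uwf_env_of z : uwf (plus_ar C) (env_of z).
Proof. by rewrite /env_of; case: insub => // x; apply: uwf_ucor. Qed.

Lemma env_of_comp z i w : i < ar z -> op_out C w = op_in C z i -> 0 < ar w ->
  env_cong C (graft (env_of z) i (env_of w)) (env_of (op_comp C z i w)).
Proof.
move=> Hi Hw Hw0; have EC := env_congruence.
case: (ltnP 1 (ar w)) => Hw1; last first.
  have -> : w = op_unit C (op_in C z i) by rewrite -Hw; apply: ar1_unit; lia.
  rewrite (env_of_unit (z := op_unit _ _)) ?graft_unit_leaf ?comp_unitr ?/op_ar ?ins_unit //.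
  exact: (congr_refl EC (uwf_env_of z)).
case: (ltnP 1 (ar z)) => Hz; last first.
  have Ez : z = op_unit C (op_out C z) by apply: ar1_unit; lia.
  have Hi0 : i = 0 by lia.
  rewrite Hi0 in Hw Hi *; rewrite (env_of_unit (z := z)) //=.
  have Ein : op_ins C z = [:: op_out C z] by rewrite {1}Ez ins_unit.
  have -> : z = op_unit C (op_out C w) by rewrite Hw /op_in Ein /= -Ez.
  by rewrite comp_unitl; exact: (congr_refl EC (uwf_env_of w)).
have Hc : 1 < ar (op_comp C z i w) by rewrite ar_comp //; lia.
pose zx : Cplus C := exist _ z Hz; pose wx : Cplus C := exist _ w Hw1.
pose cx : Cplus C := exist _ (op_comp C z i w) Hc.
rewrite -[z]/(val zx) -[w]/(val wx) -[op_comp _ _ _ _]/(val cx) !env_of_val.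
by apply: gen_cong_incl; exists zx, wx, cx, i.
Qed.

Lemma phi_leaf c : phi (Leaf c) = op_unit C c.
Proof. by case: Hphi => H _; apply: H. Qed.

Lemma phi_out S : cwf Gout Gin S -> op_out C (phi S) = cout Gout S.
Proof. by case: Hphi => _ [H _] /H[]. Qed.

Lemma phi_ins S : cwf Gout Gin S -> op_ins C (phi S) = leaves S.
Proof. by case: Hphi => _ [H _] /H[]. Qed.

Lemma phi_graft S i T : cwf Gout Gin S -> cwf Gout Gin T -> cok Gout S i T ->
  phi (graft S i T) = op_comp C (phi S) i (phi T).
Proof. by case: Hphi => _ [_ [H _]]; apply: H. Qed.

Lemma phi_surj x : exists S, cwf Gout Gin S /\ phi S = x.
Proof. by case: Hphi => _ [_ [_ [H _]]]. Qed.

Lemma phi_ker S T : cwf Gout Gin S -> cwf Gout Gin T ->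
  phi S = phi T <-> ccong Gout Gin R S T.
Proof. by case: Hphi => _ [_ [_ [_ H]]]; apply: H. Qed.

Lemma ar_phi S : cwf Gout Gin S -> ar (phi S) = nleaves S.
Proof. by move=> HS; rewrite /op_ar phi_ins. Qed.

Lemma R_phi S T : R S T -> phi S = phi T.
Proof.
move=> HST; have [HS HT] := proj1 HR S T HST.
by apply/(phi_ker HS HT); apply: gen_cong_incl.
Qed.

Lemma cok_phi S i T : cwf Gout Gin S -> cwf Gout Gin T ->
  cok Gout S i T = (i < ar (phi S)) && (op_out C (phi T) == op_in C (phi S) i).
Proof.
move=> HS HT; rewrite /cok /op_in ar_phi // phi_out // phi_ins //.
by apply/andb_id2l => Hi; rewrite (set_nth_default (cout Gout T)).
Qed.

Lemma nleaves_ccor g : nleaves (ccor Gin g) = size (Gin g).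
Proof. by rewrite nleaves_node; elim: (Gin g) => //= c l ->. Qed.

Lemma cwf_ccor g : cwf Gout Gin (ccor Gin g).
Proof.
rewrite /= -map_comp map_id eqxx /=; by elim: (Gin g).
Qed.

Lemma nleaves_gt0 S : cwf Gout Gin S -> 0 < nleaves S.
Proof.
elim/(cwf_graft_ind (Gout := Gout)) => [//|g|S' i T _ _ /andP[Hi _] HS HT].
  by rewrite nleaves_ccor; apply: leq_trans (HG g).
by rewrite nleaves_graft //; lia.
Qed.

Lemma gen_elt_subproof g : 1 < ar (phi (ccor Gin g)).
Proof. by rewrite ar_phi ?cwf_ccor ?nleaves_ccor. Qed.

Definition gen_elt g : Cplus C := exist _ (phi (ccor Gin g)) (gen_elt_subproof g).

Lemma plus_ar_gen_elt g : plus_ar C (gen_elt g) = size (Gin g).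
Proof. by rewrite /plus_ar /= ar_phi ?cwf_ccor ?nleaves_ccor. Qed.

Definition Theta : tree unit G -> tree unit (Cplus C) := tmap id gen_elt.

Lemma uwf_Theta t : uwf gar t -> uwf (plus_ar C) (Theta t).
Proof. by rewrite !uwfE; apply: twf_tmap => // g; rewrite plus_ar_gen_elt map_id. Qed.

Lemma Theta_ucor g : Theta (ucor gar g) = ucor (plus_ar C) (gen_elt g).
Proof. by rewrite /ucor /Theta /= map_nseq plus_ar_gen_elt. Qed.

Lemma Theta_graft t i u : Theta (graft t i u) = graft (Theta t) i (Theta u).
Proof. exact: tmap_graft. Qed.

Lemma forgetE S : forget S = tmap (fun _ => tt) id S.
Proof. by elim/tree_ind': S => [c|g ts IH] //=; congr Node; apply: eq_map_In. Qed.

Lemma uwf_forget S : cwf Gout Gin S -> uwf gar (forget S).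
Proof.
by rewrite forgetE uwfE; apply: twf_tmap => // g; rewrite [map _ _]unit_nseq size_map.
Qed.

Lemma forget_graft S i T : forget (graft S i T) = graft (forget S) i (forget T).
Proof. by rewrite !forgetE tmap_graft. Qed.

Lemma nleaves_forget S : nleaves (forget S) = nleaves S.
Proof. by rewrite forgetE nleaves_tmap. Qed.

Lemma forget_ccor g : forget (ccor Gin g) = ucor gar g.
Proof. by rewrite /= /ucor; congr Node; elim: (Gin g) => //= c l ->. Qed.

Lemma env_Theta_forget S : cwf Gout Gin S -> env_cong C (Theta (forget S)) (env_of (phi S)).
Proof.
have EC := env_congruence.
elim/(cwf_graft_ind (Gout := Gout)) => [c|g|S' i T HS HT Hok IHS IHT].
- by rewrite phi_leaf env_of_unit ?/op_ar ?ins_unit //; exact: (congr_refl EC _).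
- rewrite forget_ccor Theta_ucor -env_of_val.
  exact: (congr_refl EC (uwf_env_of _)).
have /andP[Hi _] := Hok; have := Hok; rewrite cok_phi // => /andP[Hi' /eqP Hout].
rewrite phi_graft // forget_graft Theta_graft.
apply: (congr_trans EC (T := graft (env_of (phi S')) i (env_of (phi T)))).
  by apply: (congr_graft EC IHS IHT); rewrite /uok nleaves_tmap nleaves_forget.
by apply: env_of_comp; rewrite ?ar_phi ?nleaves_gt0.
Qed.

Lemma forget_rel_prof t u : forget_rel R t u -> prof_rel (uwf gar) nleaves t u.
Proof.
move=> [S [T [HST [-> ->]]]]; have [HS HT] := proj1 HR S T HST.
by split; rewrite ?uwf_forget // !nleaves_forget -!ar_phi // (R_phi HST).
Qed.

Lemma ucong_congruence : is_congruence (uwf gar) nleaves uok graft (ucong gar (forget_rel R)).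
Proof. exact: (gen_cong_congruence (uprof_congruence _) forget_rel_prof). Qed.

Lemma ucong_forget S T : cwf Gout Gin S -> cwf Gout Gin T -> phi S = phi T ->
  ucong gar (forget_rel R) (forget S) (forget T).
Proof.
move=> HS HT /(phi_ker HS HT); apply: (gen_cong_map (cprof_congruence _ _) ucong_congruence).
- by move=> S1 S1' T1 T1' i eS eT; rewrite (cok_prof i eS eT).
- exact: uwf_forget.
- by move=> S' i T' _ _ /andP[]; rewrite /uok nleaves_forget.
- by move=> S' i T' _ _ _; apply: forget_graft.
- move=> S' T' HST; have [HS' HT'] := proj1 HR S' T' HST.
  by split; rewrite // /cprof -phi_out // -phi_ins // (R_phi HST) phi_out ?phi_ins.
by move=> S' T' HST; apply: gen_cong_incl; exists S', T'.
Qed.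

Lemma Theta_ucong t u : ucong gar (forget_rel R) t u -> env_cong C (Theta t) (Theta u).
Proof.
have EC := env_congruence.
apply: (gen_cong_map (uprof_congruence _) EC) => //.
- exact: uok_prof.
- exact: uwf_Theta.
- by move=> t' i u' _ _; rewrite /uok nleaves_tmap.
- by move=> t' i u' _ _ _; apply: Theta_graft.
- exact: forget_rel_prof.
move=> _ _ [S [T [HST [-> ->]]]]; have [HS HT] := proj1 HR S T HST.
apply: (congr_trans EC (env_Theta_forget HS)); rewrite (R_phi HST).
exact: (congr_sym EC (env_Theta_forget HT)).
Qed.

Definition rep (x : Cplus C) : ctree k G :=
  proj1_sig (constructive_indefinite_description _ (phi_surj (val x))).

Lemma rep_spec (x : Cplus C) : cwf Gout Gin (rep x) /\ phi (rep x) = val x.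
Proof. exact: (proj2_sig (constructive_indefinite_description _ (phi_surj (val x)))). Qed.

Lemma nleaves_forget_rep (x : Cplus C) : nleaves (forget (rep x)) = plus_ar C x.
Proof. by have [Hw Hphi'] := rep_spec x; rewrite nleaves_forget -ar_phi // Hphi'. Qed.

Lemma uwf_forget_rep (x : Cplus C) : uwf gar (forget (rep x)).
Proof. exact: (uwf_forget (proj1 (rep_spec x))). Qed.

Definition Psi : tree unit (Cplus C) -> tree unit G := ext (fun x : Cplus C => forget (rep x)).

Lemma uwf_Psi A : uwf (plus_ar C) A -> uwf gar (Psi A).
Proof. exact: (uwf_ext nleaves_forget_rep uwf_forget_rep). Qed.

Lemma nleaves_Psi A : uwf (plus_ar C) A -> nleaves (Psi A) = nleaves A.
Proof. exact: (nleaves_ext nleaves_forget_rep). Qed.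

Lemma Psi_graft A i B : uwf (plus_ar C) A -> i < nleaves A ->
  Psi (graft A i B) = graft (Psi A) i (Psi B).
Proof. exact: (ext_graft nleaves_forget_rep). Qed.

Lemma Psi_ucor (x : Cplus C) : Psi (ucor (plus_ar C) x) = forget (rep x).
Proof. exact: (ext_ucor nleaves_forget_rep). Qed.

Lemma Theta_Psi A : uwf (plus_ar C) A -> env_cong C (Theta (Psi A)) A.
Proof.
have EC := env_congruence.
elim/(uwf_graft_ind (ar := plus_ar C)) => [|x|A' i B HA HB Hi IHA IHB].
- exact: (congr_refl EC _).
- rewrite Psi_ucor; have [Hw Hphi'] := rep_spec x.
  by have := env_Theta_forget Hw; rewrite Hphi' env_of_val.
rewrite Psi_graft // Theta_graft; apply: (congr_graft EC IHA IHB).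
by rewrite /uok nleaves_tmap nleaves_Psi.
Qed.

Lemma Psi_Theta t : uwf gar t -> ucong gar (forget_rel R) (Psi (Theta t)) t.
Proof.
have UC := ucong_congruence.
elim/(uwf_graft_ind (ar := gar)) => [|g|t' i u Ht Hu Hi IHt IHu].
- exact: (congr_refl UC _).
- rewrite Theta_ucor Psi_ucor; have [Hw Hphi'] := rep_spec (gen_elt g).
  by rewrite -forget_ccor; apply: ucong_forget; rewrite ?cwf_ccor.
rewrite Theta_graft Psi_graft ?uwf_Theta ?nleaves_tmap //.
by apply: (congr_graft UC IHt IHu); rewrite /uok nleaves_Psi ?uwf_Theta ?nleaves_tmap.
Qed.

Lemma Psi_env A B : env_cong C A B -> ucong gar (forget_rel R) (Psi A) (Psi B).
Proof.
apply: (gen_cong_map (uprof_congruence _) ucong_congruence) => //.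
- exact: uok_prof.
- exact: uwf_Psi.
- by move=> A' i B' HA _; rewrite /uok nleaves_Psi.
- by move=> A' i B' HA _; apply: Psi_graft.
- exact: env_rel_prof.
move=> _ _ [x [y [xy [i [Hi [Hout [Hxy [-> ->]]]]]]]].
have [Hwx Hx] := rep_spec x; have [Hwy Hy] := rep_spec y; have [Hwxy Hxy'] := rep_spec xy.
have Hok : cok Gout (rep x) i (rep y) by rewrite cok_phi // Hx Hy Hi Hout eqxx.
rewrite Psi_graft ?uwf_ucor ?nleaves_ucor // !Psi_ucor.
rewrite -forget_graft; apply: ucong_forget; rewrite ?(proj1 (cwf_graft Hwx Hwy Hok)) //.
by rewrite phi_graft // Hx Hy Hxy'; apply/esym.
Qed.
End Envelope.

Theorem proposition1p7 (k : nat) (k_pos : 0 < k) (C : coperad k)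
    (HC : is_coperad C)
    (G : Type) (Gout : G -> 'I_k) (Gin : G -> seq 'I_k)
    (HG : forall g, 2 <= size (Gin g))
    (R : ctree k G -> ctree k G -> Prop)
    (HR : is_equiv_on (cwf Gout Gin) R)
    (phi : ctree k G -> op_car C)
    (Hphi : presents C Gout Gin R phi) :
  let gar := fun g : G => size (Gin g) in
  exists Theta : tree unit G -> tree unit (Cplus C),
    (forall S, uwf gar S ->
        uwf (plus_ar C) (Theta S) /\ nleaves (Theta S) = nleaves S) /\
    env_cong C (Theta (Leaf tt)) (Leaf tt) /\
    (forall S i T, uwf gar S -> uwf gar T -> i < nleaves S ->
        env_cong C (Theta (graft S i T)) (graft (Theta S) i (Theta T))) /\
    (forall S T, uwf gar S -> uwf gar T ->
        (ucong gar (forget_rel R) S T <-> env_cong C (Theta S) (Theta T))) /\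
    (forall A, uwf (plus_ar C) A ->
        exists S, uwf gar S /\ env_cong C (Theta S) A) /\
    (forall (g : G) (x : Cplus C), proj1_sig x = phi (ccor Gin g) ->
        env_cong C (Theta (ucor gar g)) (ucor (plus_ar C) x)).
Proof.
move=> gar; rewrite {}/gar; have EC := env_congruence HC; have UC := ucong_congruence HR Hphi.
exists (Theta HG Hphi); split; [|split; [|split; [|split; [|split]]]].
- by move=> t Ht; rewrite uwf_Theta // nleaves_tmap.
- exact: (congr_refl EC).
- move=> t i u Ht Hu Hi; rewrite Theta_graft; apply: (congr_refl EC).
  by rewrite uwf_graft ?uwf_Theta ?nleaves_tmap.
- move=> t u Ht Hu; split; first exact: Theta_ucong.
  move=> /(Psi_env HC HR Hphi) Htu; have Ht' := Psi_Theta HG HR Hphi Ht.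
  exact: (congr_trans UC (congr_sym UC Ht') (congr_trans UC Htu (Psi_Theta HG HR Hphi Hu))).
- move=> A HA; exists (Psi Hphi A); split; [exact: uwf_Psi | exact: Theta_Psi].
move=> g x Hx; rewrite Theta_ucor (_ : gen_elt HG Hphi g = x); last by apply: val_inj.
exact: (congr_refl EC (uwf_ucor _ _)).
Qed.
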